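(* For every integer $k\ge0$ and every $\mathbf q\in C^{k+1}[-1,1]\times C^k[-1,1]$, $$\operatorname{Re}\langle\tilde{\mathbf L}\mathbf q,\mathbf q\rangle_k\le-\tfrac12\|\mathbf q\|_k^2 .$$
   Context: $\tilde{\mathbf L}\mathbf q=\big(-y\partial_yq_1+q_2-q_1(-1),\ \partial_y^2q_1-q_2-y\partial_yq_2\big)$, where $q_1(-1)$ denotes the constant function with that value. For $\mathbf q,\tilde{\mathbf q}$ sufficiently smooth: $\langle\mathbf q,\tilde{\mathbf q}\rangle_0=\int_{-1}^1\partial_yq_1\overline{\partial_y\tilde q_1}\,dy+\int_{-1}^1q_2\overline{\tilde q_2}\,dy+q_1(-1)\overline{\tilde q_1(-1)}$, and for $k\ge1$: $\langle\mathbf q,\tilde{\mathbf q}\rangle_k=\int_{-1}^1\partial_y^{k+1}q_1\overline{\partial_y^{k+1}\tilde q_1}\,dy+\int_{-1}^1\partial_y^kq_2\overline{\partial_y^k\tilde q_2}\,dy+\langle\mathbf q,\tilde{\mathbf q}\rangle_0$; $\|\mathbf q\|_k^2=\langle\mathbf q,\mathbf q\rangle_k$. *)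

From Stdlib Require Import Reals.
From Coquelicot Require Import Coquelicot.
Open Scope R_scope.

Definition CDn (n : nat) (f : R -> C) : R -> C :=
  fun x => (Derive_n (fun t => Re (f t)) n x, Derive_n (fun t => Im (f t)) n x).

Definition RCn (m : nat) (g : R -> R) : Prop :=
  (forall j : nat, (j < m)%nat -> forall x : R, ex_derive (Derive_n g j) x) /\
  (forall j : nat, (j <= m)%nat -> forall x : R, continuous (Derive_n g j) x).

Definition CCn (m : nat) (f : R -> C) : Prop :=
  RCn m (fun t => Re (f t)) /\ RCn m (fun t => Im (f t)).

Definition CInt (f : R -> C) : C := RInt (V := C_R_CompleteNormedModule) f (-1) 1.

Definition pairD (n : nat) (f g : R -> C) : C :=
  CInt (fun y => Cmult (CDn n f y) (Cconj (CDn n g y))).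

Definition pair2 : Type := ((R -> C) * (R -> C))%type.

Definition inner0 (q qt : pair2) : C :=
  Cplus (Cplus (pairD 1 (fst q) (fst qt)) (pairD 0 (snd q) (snd qt)))
        (Cmult (fst q (-1)) (Cconj (fst qt (-1)))).

Definition inner (k : nat) (q qt : pair2) : C :=
  match k with
  | O => inner0 q qt
  | S _ => Cplus (Cplus (pairD (k + 1) (fst q) (fst qt)) (pairD k (snd q) (snd qt)))
                 (inner0 q qt)
  end.

Definition normsq (k : nat) (q : pair2) : R := Re (inner k q q).

Definition Lt (q : pair2) : pair2 :=
  ( fun y => Cminus (Cplus (Copp (Cmult (RtoC y) (CDn 1 (fst q) y))) (snd q y)) (fst q (-1)),
    fun y => Cminus (Cminus (CDn 2 (fst q) y) (snd q y)) (Cmult (RtoC y) (CDn 1 (snd q) y)) ).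

From Stdlib Require Import Reals Lra Lia FunctionalExtensionality.
From Coquelicot Require Import Coquelicot.
Open Scope R_scope.

(* Splitting q = (q1, q2) into real and imaginary parts reduces everything to real
   functions f, g on which L~ acts as Lt1, Lt2.  Since d^n (y h) = y h^(n) + n h^(n-1),
   the functions F = f^(j+1) and G = g^(j) satisfy
     d^(j+1) (Lt1 f g) = - y F' - (j+1) F + G',   d^j (Lt2 f g) = F' - G - y G' - j G,
   and integrating the derivative of F G - y (F^2 + G^2) / 2 over [-1, 1] shows that
   level j contributes
     - (j + 1/2) (|F|^2 + |G|^2) - (F(1) - G(1))^2 / 2 - (F(-1) + G(-1))^2 / 2,
   which is at most -1/2 of its share of the norm.  The point term of <.,.>_0 is absorbed
   by the boundary square at -1: with s = f'(-1) + g(-1) and e = f(-1) we have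
   Lt1 f g (-1) = s - e and - s^2 / 2 + (s - e) e = - e^2 / 2 - (s - e)^2 / 2. *)

(** * Functions of class C^n *)

Lemma RCn_le m n g : (n <= m)%nat -> RCn m g -> RCn n g.
Proof. intros Hnm [Hd Hc]; split; intros j Hj; [apply Hd | apply Hc]; lia. Qed.

Lemma RCn_ex_derive_n n g k x : RCn n g -> (k <= n)%nat -> ex_derive_n g k x.
Proof. intros [Hd _] Hk; destruct k as [|k]; [exact I | apply Hd; lia]. Qed.

Lemma RCn_continuous n g k x : RCn n g -> (k <= n)%nat -> continuous (Derive_n g k) x.
Proof. intros [_ Hc] Hk; apply Hc, Hk. Qed.

Lemma RCn_is_derive n g k x :
  RCn n g -> (k < n)%nat -> is_derive (Derive_n g k) x (Derive_n g (S k) x).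
Proof. intros [Hd _] Hk; apply Derive_correct, Hd, Hk. Qed.

Lemma RCn_of_Derive_n_eq n h (D : nat -> R -> R) :
  (forall j x, (j <= n)%nat -> Derive_n h j x = D j x) ->
  (forall j x, (j < n)%nat -> ex_derive (D j) x) ->
  (forall j x, (j <= n)%nat -> continuous (D j) x) ->
  RCn n h.
Proof.
  intros E Hd Hc; split; intros j Hj x.
  - apply (ex_derive_ext (D j)); [intros; symmetry; apply E; lia | apply Hd, Hj].
  - apply (continuous_ext (D j)); [intros; symmetry; apply E, Hj | apply Hc, Hj].
Qed.

Lemma Derive_n_Derive n f x : Derive_n (Derive f) n x = Derive_n f (S n) x.
Proof. rewrite <- (Nat.add_1_r n); apply (Derive_n_comp f n 1). Qed.

Lemma Derive_n_plus_RCn n a b x :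
  RCn n a -> RCn n b -> Derive_n (fun y => a y + b y) n x = Derive_n a n x + Derive_n b n x.
Proof.
  intros Ha Hb; apply Derive_n_plus; apply filter_forall; intros;
    eapply RCn_ex_derive_n; eassumption.
Qed.

Lemma Derive_n_minus_RCn n a b x :
  RCn n a -> RCn n b -> Derive_n (fun y => a y - b y) n x = Derive_n a n x - Derive_n b n x.
Proof.
  intros Ha Hb; apply Derive_n_minus; apply filter_forall; intros;
    eapply RCn_ex_derive_n; eassumption.
Qed.

Lemma Derive_n_id_mult n h x : RCn n h ->
  Derive_n (fun y => y * h y) n x = x * Derive_n h n x + INR n * Derive_n h (pred n) x.
Proof.
  revert x; induction n as [|n IH]; intros x Hh; [simpl; ring |].
  assert (Hn : ex_derive (Derive_n h n) x) by (apply Hh; lia).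
  assert (Hp : ex_derive (Derive_n h (pred n)) x) by (apply Hh; lia).
  cbn [Derive_n].
  rewrite (Derive_ext _ (fun y => y * Derive_n h n y + INR n * Derive_n h (pred n) y))
    by (intros; apply IH, (RCn_le (S n)); auto).
  rewrite Derive_plus, Derive_mult, Derive_scal, Derive_id;
    auto using ex_derive_mult, ex_derive_scal, ex_derive_id.
  rewrite S_INR; destruct n as [|n]; simpl pred; [simpl; ring | simpl Derive_n; ring].
Qed.

Ltac solve_continuous :=
  repeat match goal with
  | |- continuous (fun y => @?f y + @?g y) _ => apply (continuous_plus (V := R_NormedModule) f g)
  | |- continuous (fun y => @?f y - @?g y) _ => apply (continuous_minus (V := R_NormedModule) f g)
  | |- continuous (fun y => @?f y * @?g y) _ => apply (continuous_mult (K := R_AbsRing) f g)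
  | |- continuous (fun y => @?f y / _) _ => unfold Rdiv
  | |- continuous (fun y => - @?f y) _ => apply (continuous_opp (V := R_NormedModule) f)
  | |- continuous (fun y => y) _ => apply continuous_id
  | |- continuous (fun _ => _) _ => apply continuous_const
  | |- continuous _ _ => solve [auto]
  end.

Lemma RCn_plus n a b : RCn n a -> RCn n b -> RCn n (fun y => a y + b y).
Proof.
  intros Ha Hb.
  apply (RCn_of_Derive_n_eq n _ (fun j y => Derive_n a j y + Derive_n b j y)).
  - intros j x Hj; apply Derive_n_plus_RCn; apply (RCn_le n); auto.
  - intros j x Hj; apply (ex_derive_plus (V := R_NormedModule)); [apply Ha | apply Hb]; auto.
  - intros j x Hj.
    assert (continuous (Derive_n a j) x) by (apply (RCn_continuous n); auto).
    assert (continuous (Derive_n b j) x) by (apply (RCn_continuous n); auto).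
    solve_continuous.
Qed.

Lemma RCn_minus n a b : RCn n a -> RCn n b -> RCn n (fun y => a y - b y).
Proof.
  intros Ha Hb.
  apply (RCn_of_Derive_n_eq n _ (fun j y => Derive_n a j y - Derive_n b j y)).
  - intros j x Hj; apply Derive_n_minus_RCn; apply (RCn_le n); auto.
  - intros j x Hj; apply (ex_derive_minus (V := R_NormedModule)); [apply Ha | apply Hb]; auto.
  - intros j x Hj.
    assert (continuous (Derive_n a j) x) by (apply (RCn_continuous n); auto).
    assert (continuous (Derive_n b j) x) by (apply (RCn_continuous n); auto).
    solve_continuous.
Qed.

Lemma RCn_opp n a : RCn n a -> RCn n (fun y => - a y).
Proof.
  intros Ha.
  apply (RCn_of_Derive_n_eq n _ (fun j y => - Derive_n a j y)).
  - intros j x _; apply Derive_n_opp.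
  - intros j x Hj; apply (ex_derive_opp (V := R_NormedModule)), Ha, Hj.
  - intros j x Hj.
    assert (continuous (Derive_n a j) x) by (apply (RCn_continuous n); auto).
    solve_continuous.
Qed.

Lemma RCn_const n c : RCn n (fun _ => c).
Proof.
  apply (RCn_of_Derive_n_eq n _ (fun j _ => match j with O => c | S _ => 0 end)).
  - intros [|j] x _; [reflexivity | apply Derive_n_const].
  - intros [|j] x _; apply ex_derive_const.
  - intros [|j] x _; apply continuous_const.
Qed.

Lemma RCn_id_mult n h : RCn n h -> RCn n (fun y => y * h y).
Proof.
  intros Hh.
  apply (RCn_of_Derive_n_eq n _
           (fun j y => y * Derive_n h j y + INR j * Derive_n h (pred j) y)).
  - intros j x Hj; apply Derive_n_id_mult, (RCn_le n); auto.
  - intros j x Hj; apply (ex_derive_plus (V := R_NormedModule)).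
    + apply ex_derive_mult; [apply ex_derive_id | apply Hh; lia].
    + apply ex_derive_scal, Hh; lia.
  - intros j x Hj.
    assert (continuous (Derive_n h j) x) by (apply (RCn_continuous n); auto).
    assert (continuous (Derive_n h (pred j)) x) by (apply (RCn_continuous n); [exact Hh | lia]).
    solve_continuous.
Qed.

Lemma RCn_Derive n f : RCn (S n) f -> RCn n (Derive f).
Proof.
  intros Hf.
  apply (RCn_of_Derive_n_eq n _ (fun j => Derive_n f (S j))).
  - intros j x _; apply Derive_n_Derive.
  - intros j x Hj; apply Hf; lia.
  - intros j x Hj; apply (RCn_continuous (S n)); auto; lia.
Qed.

(** * The real components of L~ *)

Definition Lt1 (f g : R -> R) (y : R) : R := - (y * Derive f y) + g y - f (-1).
Definition Lt2 (f g : R -> R) (y : R) : R := Derive_n f 2 y - g y - y * Derive g y.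

Lemma RCn_Lt1 n f g : RCn (S n) f -> RCn n g -> RCn n (Lt1 f g).
Proof.
  intros Hf Hg; unfold Lt1.
  apply RCn_minus; [apply RCn_plus; [apply RCn_opp, RCn_id_mult, RCn_Derive |] |];
    auto using RCn_const.
Qed.

Lemma RCn_Lt2 n f g : RCn (S (S n)) f -> RCn (S n) g -> RCn n (Lt2 f g).
Proof.
  intros Hf Hg; unfold Lt2.
  apply RCn_minus; [apply RCn_minus |].
  - apply RCn_Derive, RCn_Derive, Hf.
  - apply (RCn_le (S n)); auto.
  - apply RCn_id_mult, RCn_Derive, Hg.
Qed.

Lemma Derive_n_Lt1 j f g x : RCn (S (S j)) f -> RCn (S j) g ->
  Derive_n (Lt1 f g) (S j) x
  = - (x * Derive_n f (S (S j)) x) - (INR j + 1) * Derive_n f (S j) x + Derive_n g (S j) x.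
Proof.
  intros Hf Hg.
  assert (Hyf : RCn (S j) (fun y => y * Derive f y)) by (apply RCn_id_mult, RCn_Derive, Hf).
  unfold Lt1.
  rewrite Derive_n_minus_RCn, Derive_n_const, Derive_n_plus_RCn, Derive_n_opp, Derive_n_id_mult,
    !Derive_n_Derive by auto using RCn_plus, RCn_opp, RCn_const, RCn_Derive.
  simpl pred; rewrite S_INR; ring.
Qed.

Lemma Derive_n_Lt2 j f g x : RCn (S (S j)) f -> RCn (S j) g ->
  Derive_n (Lt2 f g) j x
  = Derive_n f (S (S j)) x - Derive_n g j x - x * Derive_n g (S j) x - INR j * Derive_n g j x.
Proof.
  intros Hf Hg.
  assert (Hg' : RCn j g) by (apply (RCn_le (S j)); auto).
  assert (Hf'' : RCn j (Derive_n f 2)) by (apply RCn_Derive, RCn_Derive, Hf).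
  assert (Hyg : RCn j (fun y => y * Derive g y)) by (apply RCn_id_mult, RCn_Derive, Hg).
  unfold Lt2.
  rewrite !Derive_n_minus_RCn, Derive_n_id_mult by auto using RCn_minus, RCn_Derive.
  rewrite (Derive_n_comp f j 2), !Derive_n_Derive, Nat.add_comm; cbn [Nat.add].
  destruct j as [|j]; simpl pred; [cbn [INR]; ring | ring].
Qed.

(** * Integration by parts *)

Lemma ex_RInt_of_continuous (u : R -> R) a b : (forall x, continuous u x) -> ex_RInt u a b.
Proof. intros Hu; apply (ex_RInt_continuous (V := R_CompleteNormedModule)); auto. Qed.

Lemma RInt_ext_pointwise (u v : R -> R) a b :
  (forall x, u x = v x) -> RInt u a b = RInt v a b.
Proof. intros E; apply RInt_ext; intros; apply E. Qed.

Lemma RInt_plus_continuous (u v : R -> R) a b :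
  (forall x, continuous u x) -> (forall x, continuous v x) ->
  RInt (fun y => u y + v y) a b = RInt u a b + RInt v a b.
Proof.
  intros Hu Hv; apply (RInt_plus (V := R_CompleteNormedModule)); apply ex_RInt_of_continuous; auto.
Qed.

Lemma RInt_scal_continuous (c : R) (u : R -> R) a b :
  (forall x, continuous u x) -> RInt (fun y => c * u y) a b = c * RInt u a b.
Proof. intros Hu; apply (RInt_scal (V := R_CompleteNormedModule)), ex_RInt_of_continuous, Hu. Qed.

Lemma RInt_of_is_derive (h h' : R -> R) a b :
  (forall x, is_derive h x (h' x)) -> (forall x, continuous h' x) ->
  RInt h' a b = h b - h a.
Proof. intros Hh Hc; apply is_RInt_unique, (is_RInt_derive h h'); auto. Qed.

Lemma energy_identity (F F' G G' : R -> R) (c : R) :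
  (forall x, is_derive F x (F' x)) -> (forall x, is_derive G x (G' x)) ->
  (forall x, continuous F' x) -> (forall x, continuous G' x) ->
  RInt (fun y => (- (y * F' y) - (c + 1) * F y + G' y) * F y) (-1) 1
  + RInt (fun y => (F' y - G y - y * G' y - c * G y) * G y) (-1) 1
  = - (c + 1/2) * (RInt (fun y => F y * F y) (-1) 1 + RInt (fun y => G y * G y) (-1) 1)
    - ((F 1 - G 1) ^ 2 + (F (-1) + G (-1)) ^ 2) / 2.
Proof.
  intros dF dG cF' cG'.
  assert (cF : forall x, continuous F x).
  { intros x; apply (ex_derive_continuous (K := R_AbsRing) (V := R_NormedModule)).
    eexists; apply dF. }
  assert (cG : forall x, continuous G x).
  { intros x; apply (ex_derive_continuous (K := R_AbsRing) (V := R_NormedModule)).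
    eexists; apply dG. }
  set (H := fun y => F y * G y - y * (F y * F y + G y * G y) / 2).
  set (H' := fun y => F' y * G y + F y * G' y - (F y * F y + G y * G y) / 2
                      - y * (F y * F' y + G y * G' y)).
  assert (dH : forall x, is_derive H x (H' x)).
  { intros x; unfold H, H'; auto_derive.
    - repeat split; eexists; eauto.
    - replace (Derive (fun t => F t) x) with (F' x) by (symmetry; apply is_derive_unique, dF).
      replace (Derive (fun t => G t) x) with (G' x) by (symmetry; apply is_derive_unique, dG).
      field. }
  rewrite <- RInt_plus_continuous by (intros; solve_continuous).
  rewrite (RInt_ext_pointwise _ (fun y => H' y + (- (c + 1/2)) * (F y * F y + G y * G y)))
    by (intros; unfold H'; field).
  rewrite RInt_plus_continuous, RInt_scal_continuous, RInt_plus_continuous,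
    (RInt_of_is_derive H H' _ _ dH) by (intros; unfold H'; solve_continuous).
  unfold H; field.
Qed.

(** * The real inner products *)

Definition rpairD (n : nat) (u v : R -> R) : R :=
  RInt (fun y => Derive_n u n y * Derive_n v n y) (-1) 1.

Definition rinner0 (f g ft gt : R -> R) : R :=
  rpairD 1 f ft + rpairD 0 g gt + f (-1) * ft (-1).

Definition rinner (k : nat) (f g ft gt : R -> R) : R :=
  match k with
  | O => rinner0 f g ft gt
  | S _ => rpairD (k + 1) f ft + rpairD k g gt + rinner0 f g ft gt
  end.

Lemma rpairD_self_ge0 n u : (forall x, continuous (Derive_n u n) x) -> 0 <= rpairD n u u.
Proof.
  intros Hu; apply RInt_ge_0; [lra | apply ex_RInt_of_continuous; intros; solve_continuous |].
  intros; apply Rle_0_sqr.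
Qed.

Lemma rpairD_Lt_level j f g : RCn (S (S j)) f -> RCn (S j) g ->
  rpairD (S j) (Lt1 f g) f + rpairD j (Lt2 f g) g
  = - (INR j + 1/2) * (rpairD (S j) f f + rpairD j g g)
    - ((Derive_n f (S j) 1 - Derive_n g j 1) ^ 2
       + (Derive_n f (S j) (-1) + Derive_n g j (-1)) ^ 2) / 2.
Proof.
  intros Hf Hg; unfold rpairD.
  rewrite (RInt_ext_pointwise (fun y => Derive_n (Lt1 f g) (S j) y * Derive_n f (S j) y)
             (fun y => (- (y * Derive_n f (S (S j)) y) - (INR j + 1) * Derive_n f (S j) y
                        + Derive_n g (S j) y) * Derive_n f (S j) y))
    by (intros; rewrite Derive_n_Lt1; auto).
  rewrite (RInt_ext_pointwise (fun y => Derive_n (Lt2 f g) j y * Derive_n g j y)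
             (fun y => (Derive_n f (S (S j)) y - Derive_n g j y - y * Derive_n g (S j) y
                        - INR j * Derive_n g j y) * Derive_n g j y))
    by (intros; rewrite Derive_n_Lt2; auto).
  apply energy_identity; intros x.
  - apply (RCn_is_derive (S (S j))); auto.
  - apply (RCn_is_derive (S j)); auto.
  - apply (RCn_continuous (S (S j))); auto.
  - apply (RCn_continuous (S j)); auto.
Qed.

Lemma rpairD_Lt_level_le j f g : RCn (S (S j)) f -> RCn (S j) g ->
  rpairD (S j) (Lt1 f g) f + rpairD j (Lt2 f g) g
  <= - (1/2) * (rpairD (S j) f f + rpairD j g g).
Proof.
  intros Hf Hg; rewrite rpairD_Lt_level by assumption.
  assert (0 <= rpairD (S j) f f)
    by (apply rpairD_self_ge0; intros; apply (RCn_continuous (S (S j))); auto).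
  assert (0 <= rpairD j g g)
    by (apply rpairD_self_ge0; intros; apply (RCn_continuous (S j)); auto).
  assert (0 <= INR j * (rpairD (S j) f f + rpairD j g g))
    by (apply Rmult_le_pos; [apply pos_INR | lra]).
  pose proof (pow2_ge_0 (Derive_n f (S j) 1 - Derive_n g j 1)).
  pose proof (pow2_ge_0 (Derive_n f (S j) (-1) + Derive_n g j (-1))).
  lra.
Qed.

Lemma rinner0_Lt_le f g : RCn 2 f -> RCn 1 g ->
  rinner0 (Lt1 f g) (Lt2 f g) f g <= - (1/2) * rinner0 f g f g.
Proof.
  intros Hf Hg; unfold rinner0.
  rewrite (rpairD_Lt_level 0) by assumption.
  assert (0 <= rpairD 1 f f)
    by (apply rpairD_self_ge0; intros; apply (RCn_continuous 2); auto).
  assert (0 <= rpairD 0 g g)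
    by (apply rpairD_self_ge0; intros; apply (RCn_continuous 1); auto).
  unfold Lt1; change (Derive_n f 1) with (Derive f); change (Derive_n g 0) with g;
    change (INR 0) with 0.
  pose proof (pow2_ge_0 (Derive f 1 - g 1)).
  pose proof (pow2_ge_0 (Derive f (-1) + g (-1) - f (-1))).
  lra.
Qed.

Lemma rinner_Lt_le k f g : RCn (S (S k)) f -> RCn (S k) g ->
  rinner k (Lt1 f g) (Lt2 f g) f g <= - (1/2) * rinner k f g f g.
Proof.
  intros Hf Hg.
  pose proof (rinner0_Lt_le f g (RCn_le (S (S k)) 2 f ltac:(lia) Hf)
                                (RCn_le (S k) 1 g ltac:(lia) Hg)).
  destruct k as [|k]; [assumption |].
  pose proof (rpairD_Lt_level_le (S k) f g Hf Hg).
  unfold rinner; rewrite Nat.add_1_r; lra.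
Qed.

(** * Complexification *)

Lemma Re_CInt (h : R -> C) :
  ex_RInt (fun y => Re (h y)) (-1) 1 -> ex_RInt (fun y => Im (h y)) (-1) 1 ->
  Re (CInt h) = RInt (fun y => Re (h y)) (-1) 1.
Proof.
  intros Hre Him.
  assert (Hh : is_RInt (V := C_R_CompleteNormedModule) h (-1) 1
                 (RInt (fun y => Re (h y)) (-1) 1, RInt (fun y => Im (h y)) (-1) 1)).
  { apply (is_RInt_fct_extend_pair (U := R_NormedModule) (V := R_NormedModule));
      apply (RInt_correct (V := R_CompleteNormedModule)); assumption. }
  unfold CInt; rewrite (is_RInt_unique _ _ _ _ Hh); reflexivity.
Qed.

Lemma Re_Cmult_Cconj (a b : C) : Re (Cmult a (Cconj b)) = Re a * Re b + Im a * Im b.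
Proof. unfold Cmult, Cconj, Re, Im; simpl; ring. Qed.

Lemma Re_pairD n (u v : R -> C) :
  (forall x, continuous (Derive_n (fun t => Re (u t)) n) x) ->
  (forall x, continuous (Derive_n (fun t => Im (u t)) n) x) ->
  (forall x, continuous (Derive_n (fun t => Re (v t)) n) x) ->
  (forall x, continuous (Derive_n (fun t => Im (v t)) n) x) ->
  Re (pairD n u v)
  = rpairD n (fun t => Re (u t)) (fun t => Re (v t))
    + rpairD n (fun t => Im (u t)) (fun t => Im (v t)).
Proof.
  intros Hu1 Hu2 Hv1 Hv2; unfold pairD, rpairD.
  rewrite Re_CInt.
  - rewrite <- RInt_plus_continuous by (intros; solve_continuous).
    apply RInt_ext_pointwise; intros; apply Re_Cmult_Cconj.
  - apply ex_RInt_of_continuous; intros; unfold CDn, Cmult, Cconj; simpl; solve_continuous.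
  - apply ex_RInt_of_continuous; intros; unfold CDn, Cmult, Cconj; simpl; solve_continuous.
Qed.

Lemma CCn_le m n q : (n <= m)%nat -> CCn m q -> CCn n q.
Proof. intros Hnm [Hre Him]; split; apply (RCn_le m); assumption. Qed.

Lemma Re_inner k (q qt : pair2) :
  CCn (S k) (fst q) -> CCn k (snd q) -> CCn (S k) (fst qt) -> CCn k (snd qt) ->
  Re (inner k q qt)
  = rinner k (fun t => Re (fst q t)) (fun t => Re (snd q t))
             (fun t => Re (fst qt t)) (fun t => Re (snd qt t))
    + rinner k (fun t => Im (fst q t)) (fun t => Im (snd q t))
               (fun t => Im (fst qt t)) (fun t => Im (snd qt t)).
Proof.
  intros [Hq1 Hq1'] [Hq2 Hq2'] [Hr1 Hr1'] [Hr2 Hr2'].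
  destruct k as [|k]; unfold inner, inner0, rinner, rinner0;
    rewrite !re_plus, Re_Cmult_Cconj, ?Nat.add_1_r, !Re_pairD;
    try (intros; eapply RCn_continuous; [eassumption | lia]);
    lra.
Qed.

Lemma Re_Lt_fst (q : pair2) :
  (fun t => Re (fst (Lt q) t)) = Lt1 (fun t => Re (fst q t)) (fun t => Re (snd q t)).
Proof. apply functional_extensionality; intros; unfold Lt, Lt1, CDn, Re, Im; simpl; ring. Qed.

Lemma Im_Lt_fst (q : pair2) :
  (fun t => Im (fst (Lt q) t)) = Lt1 (fun t => Im (fst q t)) (fun t => Im (snd q t)).
Proof. apply functional_extensionality; intros; unfold Lt, Lt1, CDn, Re, Im; simpl; ring. Qed.

Lemma Re_Lt_snd (q : pair2) :
  (fun t => Re (snd (Lt q) t)) = Lt2 (fun t => Re (fst q t)) (fun t => Re (snd q t)).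
Proof. apply functional_extensionality; intros; unfold Lt, Lt2, CDn, Re, Im; simpl; ring. Qed.

Lemma Im_Lt_snd (q : pair2) :
  (fun t => Im (snd (Lt q) t)) = Lt2 (fun t => Im (fst q t)) (fun t => Im (snd q t)).
Proof. apply functional_extensionality; intros; unfold Lt, Lt2, CDn, Re, Im; simpl; ring. Qed.

Lemma CCn_Lt_fst n (q : pair2) : CCn (S n) (fst q) -> CCn n (snd q) -> CCn n (fst (Lt q)).
Proof.
  intros [Hf1 Hf2] [Hg1 Hg2]; split; [rewrite Re_Lt_fst | rewrite Im_Lt_fst];
    apply RCn_Lt1; assumption.
Qed.

Lemma CCn_Lt_snd n (q : pair2) : CCn (S (S n)) (fst q) -> CCn (S n) (snd q) -> CCn n (snd (Lt q)).
Proof.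
  intros [Hf1 Hf2] [Hg1 Hg2]; split; [rewrite Re_Lt_snd | rewrite Im_Lt_snd];
    apply RCn_Lt2; assumption.
Qed.

Theorem mainTheorem7 (k : nat) (q1 q2 : R -> C) :
  CCn (k + 2) q1 -> CCn (k + 1) q2 ->
  Re (inner k (Lt (q1, q2)) (q1, q2)) <= - (1 / 2) * normsq k (q1, q2).
Proof.
  rewrite (Nat.add_comm k 2), (Nat.add_comm k 1); intros Hq1 Hq2.
  assert (Hq1' : CCn (S k) q1) by (apply (CCn_le (S (S k))); auto).
  assert (Hq2' : CCn k q2) by (apply (CCn_le (S k)); auto).
  unfold normsq.
  rewrite (Re_inner k (Lt (q1, q2))), (Re_inner k (q1, q2));
    auto using CCn_Lt_fst, CCn_Lt_snd.
  rewrite Re_Lt_fst, Im_Lt_fst, Re_Lt_snd, Im_Lt_snd; cbn [fst snd].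
  destruct Hq1 as [Hf1 Hf2], Hq2 as [Hg1 Hg2].
  pose proof (rinner_Lt_le k _ _ Hf1 Hg1).
  pose proof (rinner_Lt_le k _ _ Hf2 Hg2).
  lra.
Qed.
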